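(* In $(\lambda^2\beta\eta\pi* )'$: (1) for every type $\psi$, the set $\mathcal{SN}^\psi$ of SN terms of type $\psi$ is an RC of type $\psi$; (2) if $\mathcal{R}_i$ is an RC of type $\varphi_i$ for $i=1,2$, then $\mathcal{R}_1\times\mathcal{R}_2$ is an RC of type $\varphi_1\times\varphi_2$ and $\mathcal{R}_1\to\mathcal{R}_2$ is an RC of type $\varphi_1\to\varphi_2$.
   Context: System $(\lambda^2\beta\eta\pi* )'$. Types are generated from type variables $X,Y,\ldots$ and a type constant $\top$ by $\varphi\times\psi$, $\varphi\to\psi$ and $\forall X.\varphi$. Terms are Church-style typed: the constant $*^\top$, variables $x^\varphi$, $\lambda x^\varphi.t$, application $uv$, pairs $\langle u,v\rangle$, projections $\pi_1t,\pi_2t$, universal abstraction $(\Lambda X.v^\varphi)^{\forall X.\varphi}$ (allowed only when $X$ is not free in the type of any free variable of $v$), and universal application $(t^{\forall X.\varphi}\psi)^{\varphi[X:=\psi]}$. Terms are identified up to renaming of bound variables ($\equiv$); $\mathrm{FV}$, $\mathrm{FTV}$ denote free term / type variables. $\mathit{Iso}(\top)$ is the least set of types with $\top\in\mathit{Iso}(\top)$, $\varphi\to\tau$, $\forall X.\tau\in\mathit{Iso}(\top)$ if $\tau\in\mathit{Iso}(\top)$, $\tau_1\times\tau_2\in\mathit{Iso}(\top)$ if $\tau_1,\tau_2\in\mathit{Iso}(\top)$. For $\tau\in\mathit{Iso}(\top)$: $*^\top$ is the constant, $*^{\varphi\to\tau}:=\lambda x^\varphi.*^\tau$, $*^{\tau_1\times\tau_2}:=\langle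 *^{\tau_1},*^{\tau_2}\rangle$, $*^{\forall X.\tau}:=\Lambda X.*^\tau$. The one-step relation $\to$ is the closure under all contexts of: $(\beta)$ $(\lambda x.u)v\to u[x:=v]$; $\pi_1\langle u,v\rangle\to u$, $\pi_2\langle u,v\rangle\to v$; $(\eta)$ $\lambda x.tx\to t$ ($x\notin\mathrm{FV}(t)$); $(SP)$ $\langle\pi_1u,\pi_2u\rangle\to u$; (gentop) $u^\tau\to *^\tau$ ($\tau\in\mathit{Iso}(\top)$, $u\not\equiv *^\tau$); $(\eta_{top})$ $\lambda x^\tau.t\,*^\tau\to t$ ($x\notin\mathrm{FV}(t)$, $\tau\in\mathit{Iso}(\top)$); $\langle\pi_1u,*^\tau\rangle\to u$ ($u:\varphi\times\tau$, $\tau\in\mathit{Iso}(\top)$); $\langle *^\tau,\pi_2u\rangle\to u$ ($u:\tau\times\psi$, $\tau\in\mathit{Iso}(\top)$); $(\beta^2)$ $(\Lambda X.t)\varphi\to t[X:=\varphi]$; $(\eta^2)$ $\Lambda X.sX\to s$ ($X\notin\mathrm{FTV}(s)$). A term is SN if no infinite $\to$-sequence starts from it; $\mathcal{SN}^\psi$ is the set of SN terms of type $\psi$. A term is neutral if it is not of the form $\langle u,v\rangle$, $\lambda x.v$ or $\Lambda X.u$. For a term $t$ and a variable $z^\top$, $t[*^\top:=z^\top]$ replaces every occurrence of the constant $*^\top$ in $t$ by $z^\top$; a set $A$ of terms is variant-closed if $t[*^\top:=z^\top]\in A$ for every $t\in A$ and every variable $z^\top$ not occurring in $t$. A reducibility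 candidate (RC) of type $\varphi$ is a set $\mathcal{R}$ of terms of type $\varphi$ such that: (CR0) if $\varphi\in\mathit{Iso}(\top)$ then $*^\varphi\in\mathcal{R}$, and $\mathcal{R}$ is variant-closed; (CR1) every $t\in\mathcal{R}$ is SN; (CR2) $t\in\mathcal{R}$, $t\to t'$ imply $t'\in\mathcal{R}$; (CR3) if $t$ of type $\varphi$ is neutral and every one-step reduct of $t$ is in $\mathcal{R}$, then $t\in\mathcal{R}$. For RCs $\mathcal{R}_i$ of type $\varphi_i$: $\mathcal{R}_1\times\mathcal{R}_2=\{t^{\varphi_1\times\varphi_2}\mid \pi_it\in\mathcal{R}_i, i=1,2\}$ and $\mathcal{R}_1\to\mathcal{R}_2=\{t^{\varphi_1\to\varphi_2}\mid \forall u\in\mathcal{R}_1,\ tu\in\mathcal{R}_2\}$. *)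

(* System (lambda^2 beta eta pi * )'  : Church-style System F
   with products and a unit-like type constant Top.

   Representation conventions:
   - Bound type variables are de Bruijn indices (TBvar); free type variables
     are named (TFvar n).
   - Bound term variables are de Bruijn indices (Bvar); free term variables
     are Church-style typed named variables (Fvar n A), i.e. x^A.  Two such
     variables are equal iff name and type agree.
   - Hence alpha-equivalent terms are syntactically equal.
   - A paper term of type phi is a term t with  has_type 0 [] t phi.  *)
From Stdlib Require Import Arith List.
Import ListNotations.

Inductive ty : Type :=
| TFvar : nat -> ty
| TBvar : nat -> ty
| Top : ty
| Prod : ty -> ty -> ty
| Arr : ty -> ty -> ty
| All : ty -> ty.

Fixpoint twf (d : nat) (A : ty) : Prop :=
  match A with
  | TFvar _ => True
  | TBvar i => i < d
  | Top => True
  | Prod A B => twf d A /\ twf d B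
  | Arr A B => twf d A /\ twf d B
  | All B => twf (S d) B
  end.

Fixpoint tshift (c : nat) (A : ty) : ty :=
  match A with
  | TFvar n => TFvar n
  | TBvar i => TBvar (if c <=? i then S i else i)
  | Top => Top
  | Prod A B => Prod (tshift c A) (tshift c B)
  | Arr A B => Arr (tshift c A) (tshift c B)
  | All B => All (tshift (S c) B)
  end.

Fixpoint tsubst (k : nat) (s : ty) (A : ty) : ty :=
  match A with
  | TFvar n => TFvar n
  | TBvar i => if i <? k then TBvar i else if i =? k then s else TBvar (pred i)
  | Top => Top
  | Prod A B => Prod (tsubst k s A) (tsubst k s B)
  | Arr A B => Arr (tsubst k s A) (tsubst k s B)
  | All B => All (tsubst (S k) (tshift 0 s) B)
  end.

Inductive iso_top : ty -> Prop :=
| iso_Top : iso_top Top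
| iso_Arr : forall A t, iso_top t -> iso_top (Arr A t)
| iso_All : forall t, iso_top t -> iso_top (All t)
| iso_Prod : forall t1 t2, iso_top t1 -> iso_top t2 -> iso_top (Prod t1 t2).

Inductive tm : Type :=
| Fvar : nat -> ty -> tm
| Bvar : nat -> tm
| Star : tm
| Lam : ty -> tm -> tm
| App : tm -> tm -> tm
| Pair : tm -> tm -> tm
| Proj1 : tm -> tm
| Proj2 : tm -> tm
| TAbs : tm -> tm
| TApp : tm -> ty -> tm.

(* *^tau  (meaningful for tau in Iso(Top)) *)
Fixpoint star (A : ty) : tm :=
  match A with
  | Arr B t => Lam B (star t)
  | Prod t1 t2 => Pair (star t1) (star t2)
  | All t => TAbs (star t)
  | _ => Star
  end.

Fixpoint lift (c : nat) (t : tm) : tm :=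
  match t with
  | Fvar n A => Fvar n A
  | Bvar i => Bvar (if c <=? i then S i else i)
  | Star => Star
  | Lam A b => Lam A (lift (S c) b)
  | App a b => App (lift c a) (lift c b)
  | Pair a b => Pair (lift c a) (lift c b)
  | Proj1 a => Proj1 (lift c a)
  | Proj2 a => Proj2 (lift c a)
  | TAbs b => TAbs (lift c b)
  | TApp b A => TApp (lift c b) A
  end.

Fixpoint tm_tshift (c : nat) (t : tm) : tm :=
  match t with
  | Fvar n A => Fvar n A
  | Bvar i => Bvar i
  | Star => Star
  | Lam A b => Lam (tshift c A) (tm_tshift c b)
  | App a b => App (tm_tshift c a) (tm_tshift c b)
  | Pair a b => Pair (tm_tshift c a) (tm_tshift c b)
  | Proj1 a => Proj1 (tm_tshift c a)
  | Proj2 a => Proj2 (tm_tshift c a)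
  | TAbs b => TAbs (tm_tshift (S c) b)
  | TApp b A => TApp (tm_tshift c b) (tshift c A)
  end.

Fixpoint subst (k : nat) (v : tm) (t : tm) : tm :=
  match t with
  | Fvar n A => Fvar n A
  | Bvar i => if i <? k then Bvar i else if i =? k then v else Bvar (pred i)
  | Star => Star
  | Lam A b => Lam A (subst (S k) (lift 0 v) b)
  | App a b => App (subst k v a) (subst k v b)
  | Pair a b => Pair (subst k v a) (subst k v b)
  | Proj1 a => Proj1 (subst k v a)
  | Proj2 a => Proj2 (subst k v a)
  | TAbs b => TAbs (subst k (tm_tshift 0 v) b)
  | TApp b A => TApp (subst k v b) A
  end.

Fixpoint tm_tsubst (k : nat) (s : ty) (t : tm) : tm :=
  match t with
  | Fvar n A => Fvar n A
  | Bvar i => Bvar i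
  | Star => Star
  | Lam A b => Lam (tsubst k s A) (tm_tsubst k s b)
  | App a b => App (tm_tsubst k s a) (tm_tsubst k s b)
  | Pair a b => Pair (tm_tsubst k s a) (tm_tsubst k s b)
  | Proj1 a => Proj1 (tm_tsubst k s a)
  | Proj2 a => Proj2 (tm_tsubst k s a)
  | TAbs b => TAbs (tm_tsubst (S k) (tshift 0 s) b)
  | TApp b A => TApp (tm_tsubst k s b) (tsubst k s A)
  end.

(* Typing: d = number of enclosing type binders, G = types of the enclosing
   bound term variables (index 0 first).  Free variables carry their type,
   which may not mention bound type variables: this encodes the side
   condition on Lambda X. v. *)
Inductive has_type : nat -> list ty -> tm -> ty -> Prop :=
| T_Fvar : forall d G n A, twf 0 A -> has_type d G (Fvar n A) A
| T_Bvar : forall d G i A, nth_error G i = Some A -> has_type d G (Bvar i) A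
| T_Star : forall d G, has_type d G Star Top
| T_Lam : forall d G A t B, twf d A -> has_type d (A :: G) t B ->
    has_type d G (Lam A t) (Arr A B)
| T_App : forall d G t u A B, has_type d G t (Arr A B) -> has_type d G u A ->
    has_type d G (App t u) B
| T_Pair : forall d G u v A B, has_type d G u A -> has_type d G v B ->
    has_type d G (Pair u v) (Prod A B)
| T_Proj1 : forall d G t A B, has_type d G t (Prod A B) -> has_type d G (Proj1 t) A
| T_Proj2 : forall d G t A B, has_type d G t (Prod A B) -> has_type d G (Proj2 t) B
| T_TAbs : forall d G t A, has_type (S d) (map (tshift 0) G) t A ->
    has_type d G (TAbs t) (All A)
| T_TApp : forall d G t A B, twf d B -> has_type d G t (All A) ->
    has_type d G (TApp t B) (tsubst 0 B A).

(* One-step reduction, closed under all contexts; d, G record the binders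
   passed so that the typed rules (gentop, pair-top rules) can refer to the
   type of the subterm. *)
Inductive step : nat -> list ty -> tm -> tm -> Prop :=
| S_beta : forall d G A u v, step d G (App (Lam A u) v) (subst 0 v u)
| S_pi1 : forall d G u v, step d G (Proj1 (Pair u v)) u
| S_pi2 : forall d G u v, step d G (Proj2 (Pair u v)) v
| S_eta : forall d G A t, step d G (Lam A (App (lift 0 t) (Bvar 0))) t
| S_SP : forall d G u, step d G (Pair (Proj1 u) (Proj2 u)) u
| S_gentop : forall d G u T, iso_top T -> has_type d G u T -> u <> star T ->
    step d G u (star T)
| S_etatop : forall d G T t, iso_top T ->
    step d G (Lam T (App (lift 0 t) (star T))) t
| S_pairtop1 : forall d G u A T, iso_top T -> has_type d G u (Prod A T) ->
    step d G (Pair (Proj1 u) (star T)) u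
| S_pairtop2 : forall d G u T B, iso_top T -> has_type d G u (Prod T B) ->
    step d G (Pair (star T) (Proj2 u)) u
| S_beta2 : forall d G t A, step d G (TApp (TAbs t) A) (tm_tsubst 0 A t)
| S_eta2 : forall d G s, step d G (TAbs (TApp (tm_tshift 0 s) (TBvar 0))) s
| S_Lam : forall d G A t t', step d (A :: G) t t' -> step d G (Lam A t) (Lam A t')
| S_AppL : forall d G t t' u, step d G t t' -> step d G (App t u) (App t' u)
| S_AppR : forall d G t u u', step d G u u' -> step d G (App t u) (App t u')
| S_PairL : forall d G u u' v, step d G u u' -> step d G (Pair u v) (Pair u' v)
| S_PairR : forall d G u v v', step d G v v' -> step d G (Pair u v) (Pair u v')
| S_Proj1 : forall d G t t', step d G t t' -> step d G (Proj1 t) (Proj1 t')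
| S_Proj2 : forall d G t t', step d G t t' -> step d G (Proj2 t) (Proj2 t')
| S_TAbs : forall d G t t', step (S d) (map (tshift 0) G) t t' ->
    step d G (TAbs t) (TAbs t')
| S_TApp : forall d G t t' A, step d G t t' -> step d G (TApp t A) (TApp t' A).

Definition typed (t : tm) (A : ty) : Prop := has_type 0 [] t A.
Definition red (t t' : tm) : Prop := step 0 [] t t'.

Definition SN (t : tm) : Prop :=
  ~ exists f : nat -> tm, f 0 = t /\ forall n, red (f n) (f (S n)).

Definition SNset (A : ty) : tm -> Prop := fun t => typed t A /\ SN t.

Definition neutral (t : tm) : Prop :=
  match t with
  | Pair _ _ | Lam _ _ | TAbs _ => False
  | _ => True
  end.

Fixpoint replace_star (z : nat) (t : tm) : tm :=
  match t with
  | Fvar n A => Fvar n A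
  | Bvar i => Bvar i
  | Star => Fvar z Top
  | Lam A b => Lam A (replace_star z b)
  | App a b => App (replace_star z a) (replace_star z b)
  | Pair a b => Pair (replace_star z a) (replace_star z b)
  | Proj1 a => Proj1 (replace_star z a)
  | Proj2 a => Proj2 (replace_star z a)
  | TAbs b => TAbs (replace_star z b)
  | TApp b A => TApp (replace_star z b) A
  end.

Fixpoint occurs (z : nat) (A : ty) (t : tm) : Prop :=
  match t with
  | Fvar n B => n = z /\ B = A
  | Bvar _ | Star => False
  | Lam _ b | Proj1 b | Proj2 b | TAbs b | TApp b _ => occurs z A b
  | App a b | Pair a b => occurs z A a \/ occurs z A b
  end.

Definition variant_closed (R : tm -> Prop) : Prop :=
  forall t z, R t -> ~ occurs z Top t -> R (replace_star z t).

Record RC (A : ty) (R : tm -> Prop) : Prop := {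
  rc_typed : forall t, R t -> typed t A;
  rc_CR0_star : iso_top A -> R (star A);
  rc_CR0_variant : variant_closed R;
  rc_CR1 : forall t, R t -> SN t;
  rc_CR2 : forall t t', R t -> red t t' -> R t';
  rc_CR3 : forall t, typed t A -> neutral t ->
             (forall t', red t t' -> R t') -> R t
}.

Definition RCprod (A1 A2 : ty) (R1 R2 : tm -> Prop) : tm -> Prop :=
  fun t => typed t (Prod A1 A2) /\ R1 (Proj1 t) /\ R2 (Proj2 t).

Definition RCarr (A1 A2 : ty) (R1 R2 : tm -> Prop) : tm -> Prop :=
  fun t => typed t (Arr A1 A2) /\ forall u, R1 u -> R2 (App t u).

(* Candidates consist of typed terms, so closure under reduction rests on subject
   reduction; for the typed rules (gentop, the pair-top rules) it needs uniqueness of types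
   and the fact that [star T] is a normal form of type [T].

   The delicate clause is variant closure of SN.  [restore_star z] undoes [replace_star z]
   and maps each reduction step either to a step or to an equality that strictly decreases
   the number of occurrences of [z^Top], so SN transfers from [t] to [replace_star z t]
   by lexicographic induction.  Products and arrows then follow Girard, a variable of the
   argument type (a member of every candidate) witnessing CR1 for arrows. *)

From Stdlib Require Import Arith List Lia Relations Classical ClassicalEpsilon.
Import ListNotations.

Ltac case_nat := repeat match goal with
 | |- context [?a <=? ?b] => destruct (Nat.leb_spec a b)
 | |- context [?a <? ?b] => destruct (Nat.ltb_spec a b)
 | |- context [?a =? ?b] => destruct (Nat.eqb_spec a b)
 end.

Ltac solve_tvar :=
  repeat (cbn [tshift tsubst]; case_nat; subst; cbn [tshift tsubst];
          try lia; try reflexivity; try (f_equal; lia)).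

Lemma twf_mono A : forall n m, twf n A -> n <= m -> twf m A.
Proof.
  induction A; simpl; intros; try tauto; try lia.
  - destruct H; split; eauto.
  - destruct H; split; eauto.
  - eapply IHA; eauto; lia.
Qed.

Lemma twf_tshift A : forall n c, twf n A -> twf (S n) (tshift c A).
Proof.
  induction A; simpl; intros; try tauto.
  - case_nat; lia.
  - destruct H; split; eauto.
  - destruct H; split; eauto.
  - eauto.
Qed.

Lemma twf_tshift_inv A : forall n c, twf (S n) (tshift c A) -> c <= n -> twf n A.
Proof.
  induction A; simpl; intros; try tauto.
  - revert H; case_nat; lia.
  - destruct H; split; eauto.
  - destruct H; split; eauto.
  - eapply IHA; eauto; lia.
Qed.

Lemma twf_tsubst A : forall n k B, twf (S n) A -> twf n B -> k <= n ->
  twf n (tsubst k B A).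
Proof.
  induction A; simpl; intros; try tauto.
  - case_nat; simpl; auto; lia.
  - destruct H; split; eauto.
  - destruct H; split; eauto.
  - apply IHA; auto using twf_tshift; lia.
Qed.

Lemma tshift_twf A : forall n c, twf n A -> n <= c -> tshift c A = A.
Proof.
  induction A; simpl; intros; try reflexivity.
  - case_nat; f_equal; lia.
  - destruct H; f_equal; eauto.
  - destruct H; f_equal; eauto.
  - f_equal; eapply IHA; eauto; lia.
Qed.

Lemma tsubst_twf A : forall n k s, twf n A -> n <= k -> tsubst k s A = A.
Proof.
  induction A; simpl; intros; try reflexivity.
  - case_nat; f_equal; lia.
  - destruct H; f_equal; eauto.
  - destruct H; f_equal; eauto.
  - f_equal; eapply IHA; eauto; lia.
Qed.

Lemma tshift_inj A : forall B c, tshift c A = tshift c B -> A = B.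
Proof.
  induction A; destruct B; intros c E; simpl in E; try discriminate;
  repeat match goal with H : context [?a <=? ?b] |- _ => destruct (Nat.leb_spec a b) end;
  try discriminate; inversion E; subst; auto; f_equal; eauto; lia.
Qed.

Lemma tshift_tshift A : forall c c', c' <= c ->
  tshift c' (tshift c A) = tshift (S c) (tshift c' A).
Proof.
  induction A; intros; cbn [tshift]; try reflexivity.
  - solve_tvar.
  - f_equal; auto.
  - f_equal; auto.
  - f_equal; apply IHA; lia.
Qed.

Lemma tshift_tsubst_ge A : forall B k c, k <= c ->
  tshift c (tsubst k B A) = tsubst k (tshift c B) (tshift (S c) A).
Proof.
  induction A; intros; cbn [tshift tsubst]; try reflexivity.
  - solve_tvar.
  - f_equal; auto.
  - f_equal; auto.
  - f_equal. rewrite IHA by lia. f_equal. symmetry; apply tshift_tshift; lia.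
Qed.

Lemma tshift_tsubst_le A : forall B k c, c <= k ->
  tshift c (tsubst k B A) = tsubst (S k) (tshift c B) (tshift c A).
Proof.
  induction A; intros; cbn [tshift tsubst]; try reflexivity.
  - solve_tvar.
  - f_equal; auto.
  - f_equal; auto.
  - f_equal. rewrite IHA by lia. f_equal. symmetry; apply tshift_tshift; lia.
Qed.

Lemma tsubst_tshift A : forall k B, tsubst k B (tshift k A) = A.
Proof.
  induction A; intros; cbn [tshift tsubst]; try reflexivity.
  - solve_tvar.
  - f_equal; auto.
  - f_equal; auto.
  - f_equal; auto.
Qed.

Lemma tsubst_tsubst A : forall B C j k, j <= k ->
  tsubst k B (tsubst j C A) = tsubst j (tsubst k B C) (tsubst (S k) (tshift j B) A).
Proof.
  induction A; intros; cbn [tshift tsubst]; try reflexivity.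
  - solve_tvar; symmetry; apply tsubst_tshift.
  - f_equal; auto.
  - f_equal; auto.
  - f_equal. rewrite IHA by lia. f_equal.
    + symmetry; apply tshift_tsubst_le; lia.
    + f_equal; symmetry; apply tshift_tshift; lia.
Qed.

Lemma tsubst_var_tshift A : forall k, tsubst k (TBvar k) (tshift (S k) A) = A.
Proof.
  induction A; intros; cbn [tshift tsubst]; try reflexivity.
  - solve_tvar.
  - f_equal; auto.
  - f_equal; auto.
  - f_equal; auto.
Qed.

(** * Typing *)

Lemma has_type_lift d G t B : has_type d G t B -> forall G1 G2 A, G = G1 ++ G2 ->
  has_type d (G1 ++ A :: G2) (lift (length G1) t) B.
Proof.
  induction 1; intros G1 G2 A' E; subst; simpl; try (econstructor; eauto; fail).
  - constructor. destruct (Nat.leb_spec (length G1) i).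
    + rewrite nth_error_app2 in * by lia.
      replace (S i - length G1) with (S (i - length G1)) by lia. auto.
    + rewrite nth_error_app1 in * by lia. auto.
  - constructor; auto. apply (IHhas_type (A :: G1) G2 A'); reflexivity.
  - constructor. rewrite map_app. simpl.
    specialize (IHhas_type (map (tshift 0) G1) (map (tshift 0) G2) (tshift 0 A')).
    rewrite length_map in IHhas_type. apply IHhas_type. apply map_app.
Qed.

Lemma has_type_lift0 d G t A B : has_type d G t B -> has_type d (A :: G) (lift 0 t) B.
Proof. intros H. exact (has_type_lift d G t B H [] G A eq_refl). Qed.

Lemma has_type_unlift t : forall d G1 A G2 B,
  has_type d (G1 ++ A :: G2) (lift (length G1) t) B -> has_type d (G1 ++ G2) t B.
Proof.
  induction t; intros d G1 A' G2 B H; simpl in H; inversion H; subst;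
    try (econstructor; eauto; fail).
  - constructor. destruct (Nat.leb_spec (length G1) n).
    + rewrite nth_error_app2 in * by lia.
      replace (S n - length G1) with (S (n - length G1)) in * by lia. auto.
    + rewrite nth_error_app1 in * by lia. auto.
  - constructor; auto. apply (IHt d (t :: G1) A' G2). auto.
  - constructor. rewrite map_app in *. eapply IHt. rewrite length_map. eauto.
Qed.

Lemma has_type_unlift0 d G A t B : has_type d (A :: G) (lift 0 t) B -> has_type d G t B.
Proof. exact (has_type_unlift t d [] A G B). Qed.

Lemma has_type_tshift d G t A : has_type d G t A -> forall c, c <= d ->
  has_type (S d) (map (tshift c) G) (tm_tshift c t) (tshift c A).
Proof.
  induction 1; intros c Hc; simpl; try (econstructor; eauto; fail).
  - rewrite (tshift_twf A 0 c) by (auto; lia). constructor; auto.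
  - constructor. rewrite nth_error_map, H. reflexivity.
  - constructor; [apply twf_tshift | apply IHhas_type]; auto.
  - constructor. rewrite map_map.
    erewrite map_ext by (intros; apply tshift_tshift; lia).
    rewrite <- map_map. apply IHhas_type. lia.
  - rewrite tshift_tsubst_ge by lia. constructor; auto using twf_tshift.
Qed.

Lemma has_type_subst d G' t B : has_type d G' t B -> forall G1 A G2 v, G' = G1 ++ A :: G2 ->
  has_type d (G1 ++ G2) v A -> has_type d (G1 ++ G2) (subst (length G1) v t) B.
Proof.
  induction 1; intros G1 A' G2 w E Hv; subst; simpl; try (econstructor; eauto; fail).
  - destruct (Nat.ltb_spec i (length G1)); [|destruct (Nat.eqb_spec i (length G1))].
    + constructor. rewrite nth_error_app1 in * by lia. auto.
    + subst. rewrite nth_error_app2, Nat.sub_diag in H by lia.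
      inversion H; subst; auto.
    + constructor. rewrite nth_error_app2 in * by lia.
      replace (i - length G1) with (S (pred i - length G1)) in H by lia. auto.
  - constructor; auto. apply (IHhas_type (A :: G1) A' G2); [|apply has_type_lift0]; auto.
  - constructor. rewrite map_app, <- (length_map (tshift 0) G1).
    eapply IHhas_type; [rewrite map_app; reflexivity|].
    rewrite <- map_app. apply has_type_tshift; auto. lia.
Qed.

Lemma has_type_subst0 d G A t B v : has_type d (A :: G) t B -> has_type d G v A ->
  has_type d G (subst 0 v t) B.
Proof. intros Ht Hv. exact (has_type_subst d (A :: G) t B Ht [] A G v eq_refl Hv). Qed.

Lemma has_type_tsubst n G t A : has_type n G t A -> forall d k B, n = S d -> k <= d -> twf d B ->
  has_type d (map (tsubst k B) G) (tm_tsubst k B t) (tsubst k B A).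
Proof.
  induction 1; intros d' k B' En Hk Hw; subst; simpl; try (econstructor; eauto; fail).
  - rewrite (tsubst_twf A 0 k) by (auto; lia). constructor; auto.
  - constructor. rewrite nth_error_map, H. reflexivity.
  - constructor; [apply twf_tsubst | apply (IHhas_type d' k B')]; auto.
  - constructor. rewrite map_map.
    erewrite map_ext by (intros; apply tshift_tsubst_le; lia).
    rewrite <- map_map. apply IHhas_type; auto using twf_tshift; lia.
  - rewrite tsubst_tsubst by lia. constructor; auto using twf_tsubst.
Qed.

Ltac hyp_of_tshift u H :=
  match goal with Hx : has_type _ _ (tm_tshift _ u) _ |- _ => rename Hx into H end.

Lemma has_type_tshift_inv s : forall d G c T,
  has_type (S d) (map (tshift c) G) (tm_tshift c s) T -> c <= d ->
  exists T0, T = tshift c T0 /\ has_type d G s T0.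
Proof.
  induction s; intros d G c T H Hc; simpl in H; inversion H; subst.
  - exists T. split; [symmetry; apply (tshift_twf T 0 c); auto; lia | constructor; auto].
  - match goal with Hn : nth_error _ _ = Some _ |- _ => rewrite nth_error_map in Hn;
      destruct (nth_error G n) eqn:E; inversion Hn; subst end.
    exists t. split; auto. constructor; auto.
  - exists Top. split; auto. constructor.
  - hyp_of_tshift s Hb. destruct (IHs d (t :: G) c _ Hb Hc) as [B0 [-> HB]].
    exists (Arr t B0). split; auto. constructor; eauto using twf_tshift_inv.
  - hyp_of_tshift s1 Ha. hyp_of_tshift s2 Hb.
    destruct (IHs1 d G c _ Ha Hc) as [[] [E1 H1]]; simpl in E1; try discriminate.
    destruct (IHs2 d G c _ Hb Hc) as [T2 [E2 H2]].
    inversion E1 as [[E3 E4]]. rewrite E2 in E3. apply tshift_inj in E3. subst.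
    eexists. split; [reflexivity | econstructor; eauto].
  - hyp_of_tshift s1 Ha. hyp_of_tshift s2 Hb.
    destruct (IHs1 d G c _ Ha Hc) as [T1 [-> H1]].
    destruct (IHs2 d G c _ Hb Hc) as [T2 [-> H2]].
    exists (Prod T1 T2). split; auto. constructor; auto.
  - hyp_of_tshift s Ha.
    destruct (IHs d G c _ Ha Hc) as [[] [E1 H1]]; simpl in E1; try discriminate.
    inversion E1; subst. eexists. split; [reflexivity | econstructor; eauto].
  - hyp_of_tshift s Ha.
    destruct (IHs d G c _ Ha Hc) as [[] [E1 H1]]; simpl in E1; try discriminate.
    inversion E1; subst. eexists. split; [reflexivity | econstructor; eauto].
  - hyp_of_tshift s Ha. rewrite map_map in Ha.
    erewrite map_ext in Ha by (intros; apply tshift_tshift; lia).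
    rewrite <- map_map in Ha.
    destruct (IHs (S d) (map (tshift 0) G) (S c) _ Ha) as [T1 [-> H1]]; [lia|].
    exists (All T1). split; auto. constructor; auto.
  - hyp_of_tshift s Ha.
    destruct (IHs d G c _ Ha Hc) as [[] [E1 H1]]; simpl in E1; try discriminate.
    inversion E1; subst. eexists.
    split; [symmetry; apply tshift_tsubst_ge; lia | constructor; eauto using twf_tshift_inv].
Qed.

Lemma has_type_unique d G t A : has_type d G t A -> forall B, has_type d G t B -> A = B.
Proof.
  induction 1; intros B' HB; inversion HB; subst; auto; try congruence;
  repeat match goal with IH : forall B, has_type _ _ ?t B -> _ = B, H : has_type _ _ ?t _ |- _ =>
    apply IH in H; clear IH end; subst; congruence.
Qed.

Lemma has_type_twf d G t A : has_type d G t A -> Forall (twf d) G -> twf d A.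
Proof.
  induction 1; intros HG; simpl in *; try tauto.
  - eapply twf_mono; eauto; lia.
  - eapply Forall_forall; eauto. eapply nth_error_In; eauto.
  - split; [|apply IHhas_type; constructor]; auto.
  - apply IHhas_type. rewrite Forall_map. eapply Forall_impl; [|exact HG].
    intros; apply twf_tshift; auto.
  - apply twf_tsubst; auto. lia.
Qed.

(** * The canonical inhabitants [star] and subject reduction *)

Lemma has_type_star T : iso_top T -> forall d G, twf d T -> has_type d G (star T) T.
Proof.
  induction 1; intros d G Hw; simpl in *.
  - constructor.
  - destruct Hw. constructor; auto.
  - constructor. apply IHiso_top. auto.
  - destruct Hw; constructor; auto.
Qed.

Lemma star_type_unique T : iso_top T -> forall d G X, has_type d G (star T) X -> X = T.
Proof. induction 1; intros d G X HX; simpl in HX; inversion HX; subst; f_equal; eauto. Qed.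

Lemma subst_star T k v : subst k v (star T) = star T.
Proof. revert k v; induction T; intros; simpl; f_equal; auto. Qed.

Lemma star_head T :
  match star T with App _ _ | Proj1 _ | Proj2 _ | TApp _ _ => False | _ => True end.
Proof. destruct T; exact I. Qed.

Lemma star_normal T : iso_top T -> forall d G u, ~ step d G (star T) u.
Proof.
  intros HT. pose proof HT as Hiso. revert Hiso.
  induction HT; intros Hiso d G u Hs; pose proof (star_type_unique _ Hiso) as Hunique;
    simpl in Hs, Hunique; inversion Hs; subst;
  repeat match goal with
  | E : star ?X = _ |- _ => pose proof (star_head X) as Hh; rewrite E in Hh; contradiction
  | E : _ = star ?X |- _ => pose proof (star_head X) as Hh; rewrite <- E in Hh; contradiction
  | H : has_type _ _ _ _ |- _ => apply Hunique in H; subst; simpl in *; congruence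
  end;
  match goal with IH : iso_top _ -> forall d G u, ~ step _ _ _ _ |- _ =>
    eapply IH; eassumption end.
Qed.

Ltac inv_has_type t :=
  match goal with H : has_type _ _ t _ |- _ => inversion H; subst; clear H end.

Ltac unify_types u :=
  match goal with H1 : has_type _ _ u ?X, H2 : has_type _ _ u ?Y |- _ =>
    pose proof (has_type_unique _ _ _ _ H1 _ H2); clear H1 end.

Ltac inv_star_type :=
  match goal with H : has_type _ _ (star _) _ |- _ => apply star_type_unique in H; [subst|auto] end.

Lemma subject_reduction : forall d G t t', step d G t t' ->
  forall A, has_type d G t A -> Forall (twf d) G -> has_type d G t' A.
Proof.
  induction 1; intros T0 HT HG.
  - inversion HT; subst. inv_has_type (Lam A u). eapply has_type_subst0; eauto.
  - inversion HT; subst. inv_has_type (Pair u v). auto.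
  - inversion HT; subst. inv_has_type (Pair u v). auto.
  - inversion HT; subst. inv_has_type (App (lift 0 t) (Bvar 0)). inv_has_type (Bvar 0).
    simpl in *. match goal with H : Some _ = Some _ |- _ => inversion H; subst end.
    eapply has_type_unlift0; eauto.
  - inversion HT; subst. inv_has_type (Proj1 u). inv_has_type (Proj2 u).
    unify_types u. congruence.
  - unify_types u. subst. apply has_type_star; eauto using has_type_twf.
  - inversion HT; subst. inv_has_type (App (lift 0 t) (star T)). inv_star_type.
    eapply has_type_unlift0; eauto.
  - inversion HT; subst. inv_has_type (Proj1 u). inv_star_type. unify_types u. congruence.
  - inversion HT; subst. inv_has_type (Proj2 u). inv_star_type. unify_types u. congruence.
  - inversion HT; subst. inv_has_type (TAbs t).
    pose proof (has_type_tsubst _ _ _ _ ltac:(eassumption) d 0 A eq_refl ltac:(lia)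
                  ltac:(assumption)) as Ht.
    rewrite map_map in Ht. erewrite map_ext in Ht by (intros; apply tsubst_tshift).
    rewrite map_id in Ht. exact Ht.
  - inversion HT; subst. inv_has_type (TApp (tm_tshift 0 s) (TBvar 0)).
    match goal with H : has_type _ _ (tm_tshift _ _) _ |- _ =>
      destruct (has_type_tshift_inv _ _ _ _ _ H ltac:(lia)) as [[] [E1 H1]] end;
      simpl in E1; try discriminate.
    inversion E1; subst. rewrite tsubst_var_tshift. auto.
  - inversion HT; subst. constructor; auto.
  - inversion HT; subst. econstructor; eauto.
  - inversion HT; subst. econstructor; eauto.
  - inversion HT; subst. econstructor; eauto.
  - inversion HT; subst. econstructor; eauto.
  - inversion HT; subst. econstructor; eauto.
  - inversion HT; subst. econstructor; eauto.
  - inversion HT; subst. constructor. apply IHstep; auto.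
    rewrite Forall_map. eapply Forall_impl; [|exact HG]. intros; apply twf_tshift; auto.
  - inversion HT; subst. econstructor; eauto.
Qed.

Lemma typed_red t t' A : red t t' -> typed t A -> typed t' A.
Proof. intros Hr Ht. exact (subject_reduction 0 [] t t' Hr A Ht (Forall_nil _)). Qed.

(** * Strong normalisation *)

Definition SNacc : tm -> Prop := Acc (fun a b => red b a).

Lemma SNacc_SN t : SNacc t -> SN t.
Proof.
  induction 1 as [t _ IH]. intros [f [Hf0 Hf]].
  apply (IH (f 1)); [rewrite <- Hf0; apply Hf|].
  exists (fun n => f (S n)). split; auto.
Qed.

(* Dependent choice, via classical logic and [constructive_indefinite_description],
   turns a term outside the accessible part into an infinite reduction sequence. *)
Lemma SN_SNacc t : SN t -> SNacc t.
Proof.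
  intros Hsn. apply NNPP. intros Hacc. apply Hsn. clear Hsn.
  assert (next : forall x : {x | ~ SNacc x}, {y : {x | ~ SNacc x} | red (proj1_sig x) (proj1_sig y)}).
  { intros [x Hx]. apply constructive_indefinite_description.
    apply NNPP. intros Hno. apply Hx. constructor. intros y Hy. apply NNPP. intros Hy'.
    apply Hno. exists (exist _ y Hy'). exact Hy. }
  exists (fun n => proj1_sig (Nat.iter n (fun x => proj1_sig (next x)) (exist _ t Hacc))).
  split; [reflexivity|]. intros n. apply (proj2_sig (next _)).
Qed.

Lemma SN_red t t' : SN t -> red t t' -> SN t'.
Proof.
  intros Hsn Hr [f [Hf0 Hf]]. apply Hsn.
  exists (fun n => match n with 0 => t | S m => f m end). split; [reflexivity|].
  intros [|n]; [rewrite Hf0; exact Hr | apply Hf].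
Qed.

Lemma SN_of_reducts t : (forall t', red t t' -> SN t') -> SN t.
Proof.
  intros H [f [Hf0 Hf]]. apply (H (f 1)); [rewrite <- Hf0; apply Hf|].
  exists (fun n => f (S n)). split; auto.
Qed.

Lemma SN_preimage (f : tm -> tm) t :
  (forall s s', red s s' -> red (f s) (f s')) -> SN (f t) -> SN t.
Proof.
  intros Hf Hsn [g [Hg0 Hg]]. apply Hsn.
  exists (fun n => f (g n)). split; [congruence | auto].
Qed.

Lemma star_SN T : iso_top T -> SN (star T).
Proof. intros HT. apply SN_of_reducts. intros t' Hr. destruct (star_normal T HT 0 [] t' Hr). Qed.

(** * Variants *)

Definition is_top (A : ty) : bool := match A with Top => true | _ => false end.

Fixpoint restore_star (z : nat) (t : tm) : tm :=
  match t with
  | Fvar n A => if andb (n =? z) (is_top A) then Star else Fvar n A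
  | Bvar i => Bvar i
  | Star => Star
  | Lam A b => Lam A (restore_star z b)
  | App a b => App (restore_star z a) (restore_star z b)
  | Pair a b => Pair (restore_star z a) (restore_star z b)
  | Proj1 a => Proj1 (restore_star z a)
  | Proj2 a => Proj2 (restore_star z a)
  | TAbs b => TAbs (restore_star z b)
  | TApp b A => TApp (restore_star z b) A
  end.

Fixpoint count_var_top (z : nat) (t : tm) : nat :=
  match t with
  | Fvar n A => if andb (n =? z) (is_top A) then 1 else 0
  | Bvar _ | Star => 0
  | Lam _ b | Proj1 b | Proj2 b | TAbs b | TApp b _ => count_var_top z b
  | App a b | Pair a b => count_var_top z a + count_var_top z b
  end.

Ltac case_var_top := repeat match goal with
  | |- context [andb (?n =? ?z) (is_top ?A)] =>
      destruct (andb (n =? z) (is_top A)) eqn:?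
  end.

Lemma is_var_top n z A : andb (n =? z) (is_top A) = true -> n = z /\ A = Top.
Proof.
  intros E. apply andb_prop in E as [En EA]. apply Nat.eqb_eq in En.
  destruct A; try discriminate. auto.
Qed.

Lemma restore_star_lift z t c : restore_star z (lift c t) = lift c (restore_star z t).
Proof. revert c; induction t; intros; simpl; f_equal; auto. case_var_top; reflexivity. Qed.

Lemma restore_star_tshift z t c :
  restore_star z (tm_tshift c t) = tm_tshift c (restore_star z t).
Proof. revert c; induction t; intros; simpl; f_equal; auto. case_var_top; reflexivity. Qed.

Lemma restore_star_subst z t k v :
  restore_star z (subst k v t) = subst k (restore_star z v) (restore_star z t).
Proof.
  revert k v; induction t; intros; simpl; try (f_equal; auto; fail).
  - case_var_top; reflexivity.
  - destruct (n <? k); auto. destruct (n =? k); auto.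
  - f_equal. rewrite IHt, restore_star_lift. auto.
  - f_equal. rewrite IHt, restore_star_tshift. auto.
Qed.

Lemma restore_star_tsubst z t k s :
  restore_star z (tm_tsubst k s t) = tm_tsubst k s (restore_star z t).
Proof. revert k s; induction t; intros; simpl; f_equal; auto. case_var_top; reflexivity. Qed.

Lemma restore_star_star z T : restore_star z (star T) = star T.
Proof. induction T; simpl; f_equal; auto. Qed.

Lemma count_var_top_star z T : count_var_top z (star T) = 0.
Proof. induction T; simpl; auto; lia. Qed.

Lemma restore_star_id z t : count_var_top z t = 0 -> restore_star z t = t.
Proof.
  induction t; simpl; intros H; try (f_equal; auto; fail);
    try (rewrite IHt1, IHt2 by lia; reflexivity).
  case_var_top; [discriminate | reflexivity].
Qed.

Lemma has_type_restore_star z d G t A : has_type d G t A -> has_type d G (restore_star z t) A.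
Proof.
  induction 1; simpl; try (econstructor; eauto; fail).
  case_var_top; [apply is_var_top in Heqb as [_ ->]|]; constructor; auto.
Qed.

Lemma has_type_replace_star z d G t A : has_type d G t A -> has_type d G (replace_star z t) A.
Proof. induction 1; simpl; econstructor; eauto. exact I. Qed.

Lemma restore_replace_star z t : ~ occurs z Top t -> restore_star z (replace_star z t) = t.
Proof.
  induction t; simpl; intros Hz; try (f_equal; tauto).
  - case_var_top; [apply is_var_top in Heqb as [-> ->]; tauto | reflexivity].
  - rewrite Nat.eqb_refl. reflexivity.
Qed.

Lemma replace_restore_star z t : replace_star z (restore_star z t) = replace_star z t.
Proof.
  induction t; simpl; f_equal; auto.
  case_var_top; [apply is_var_top in Heqb as [-> ->]|]; reflexivity.
Qed.

Lemma restore_star_not_occurs z t : ~ occurs z Top (restore_star z t).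
Proof.
  induction t; simpl; try tauto.
  case_var_top; simpl; [tauto|]. intros [-> ->]. rewrite Nat.eqb_refl in Heqb. discriminate.
Qed.

(* The second case is a [gentop] step on a subterm whose restoration already is that [star]. *)
Lemma step_restore_star z : forall d G s u, step d G s u ->
  step d G (restore_star z s) (restore_star z u) \/
  (restore_star z s = restore_star z u /\ count_var_top z u < count_var_top z s).
Proof.
  induction 1; simpl;
    try (destruct IHstep as [IH | [IH Hlt]]; [left; constructor; auto | right; split; [congruence | lia]]).
  - left. rewrite restore_star_subst. constructor.
  - left; constructor.
  - left; constructor.
  - left. rewrite restore_star_lift. constructor.
  - left; constructor.
  - rewrite restore_star_star. destruct (count_var_top z u) eqn:E.
    + left. rewrite (restore_star_id z u E). constructor; auto.
    + destruct (classic (restore_star z u = star T)).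
      * right. split; auto. rewrite count_var_top_star. lia.
      * left. apply S_gentop; auto. apply has_type_restore_star; auto.
  - left. rewrite restore_star_lift, restore_star_star. apply S_etatop; auto.
  - left. rewrite restore_star_star. eapply S_pairtop1; eauto using has_type_restore_star.
  - left. rewrite restore_star_star. eapply S_pairtop2; eauto using has_type_restore_star.
  - left. rewrite restore_star_tsubst. constructor.
  - left. rewrite restore_star_tshift. constructor.
Qed.

Lemma SNacc_restore_star z s : SNacc (restore_star z s) -> SNacc s.
Proof.
  intros H. remember (restore_star z s) as s0 eqn:E. revert s E.
  induction H as [s0 _ IH]. intros s E.
  remember (count_var_top z s) as m eqn:Em. revert s E Em.
  induction m as [m IHm] using (well_founded_induction lt_wf). intros s E Em. subst.
  constructor. intros u Hu.
  destruct (step_restore_star z 0 [] s u Hu) as [Hr | [Heq Hlt]].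
  - exact (IH _ Hr u eq_refl).
  - exact (IHm _ Hlt u Heq eq_refl).
Qed.

Lemma SN_replace_star z t : SN t -> ~ occurs z Top t -> SN (replace_star z t).
Proof.
  intros Hsn Hz. apply SNacc_SN. apply (SNacc_restore_star z).
  rewrite restore_replace_star by exact Hz. apply SN_SNacc. exact Hsn.
Qed.

Notation steps d G := (clos_refl_trans tm (step d G)).

Lemma steps_congr d G d' G' (f : tm -> tm) :
  (forall t t', step d G t t' -> step d' G' (f t) (f t')) ->
  forall t t', steps d G t t' -> steps d' G' (f t) (f t').
Proof. intros Hf t t' H. induction H; eauto using rt_step, rt_refl, rt_trans. Qed.

Ltac steps_under d G C := apply (steps_congr d G _ _ C); [intros; constructor; assumption | eauto].

Ltac steps_under2 d G C t1 t2 t1' :=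
  apply rt_trans with (C t1' t2);
  [steps_under d G (fun x => C x t2) | steps_under d G (C t1')].

Lemma gentop_var_top d G z : step d G (Fvar z Top) Star.
Proof. apply (S_gentop d G (Fvar z Top) Top iso_Top); [constructor; exact I | discriminate]. Qed.

Lemma steps_restore_star z t : forall d G, steps d G t (restore_star z t).
Proof.
  induction t; intros d G; simpl.
  - case_var_top; [|apply rt_refl]. apply is_var_top in Heqb as [-> ->].
    apply rt_step, gentop_var_top.
  - apply rt_refl.
  - apply rt_refl.
  - steps_under d (t :: G) (Lam t).
  - steps_under2 d G App t1 t2 (restore_star z t1).
  - steps_under2 d G Pair t1 t2 (restore_star z t1).
  - steps_under d G Proj1.
  - steps_under d G Proj2.
  - steps_under (S d) (map (tshift 0) G) TAbs.
  - steps_under d G (fun x => TApp x t0).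
Qed.

Lemma steps_replace_star z t : forall d G, steps d G (replace_star z t) t.
Proof.
  induction t; intros d G; simpl.
  - apply rt_refl.
  - apply rt_refl.
  - apply rt_step, gentop_var_top.
  - steps_under d (t :: G) (Lam t).
  - steps_under2 d G App (replace_star z t1) (replace_star z t2) t1.
  - steps_under2 d G Pair (replace_star z t1) (replace_star z t2) t1.
  - steps_under d G Proj1.
  - steps_under d G Proj2.
  - steps_under (S d) (map (tshift 0) G) TAbs.
  - steps_under d G (fun x => TApp x t0).
Qed.

(** * Reducibility candidates *)

Lemma red_App_inv t u s : red (App t u) s ->
  (exists A b, t = Lam A b /\ s = subst 0 u b) \/
  (exists T, iso_top T /\ typed (App t u) T /\ s = star T) \/
  (exists t', red t t' /\ s = App t' u) \/
  (exists u', red u u' /\ s = App t u').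
Proof.
  intros Hr. inversion Hr; subst.
  - left. eauto.
  - right; left. eauto.
  - right; right; left. eauto.
  - right; right; right. eauto.
Qed.

Lemma red_Proj1_inv t s : red (Proj1 t) s ->
  (exists u v, t = Pair u v /\ s = u) \/
  (exists T, iso_top T /\ typed (Proj1 t) T /\ s = star T) \/
  (exists t', red t t' /\ s = Proj1 t').
Proof. intros Hr. inversion Hr; subst; eauto 6. Qed.

Lemma red_Proj2_inv t s : red (Proj2 t) s ->
  (exists u v, t = Pair u v /\ s = v) \/
  (exists T, iso_top T /\ typed (Proj2 t) T /\ s = star T) \/
  (exists t', red t t' /\ s = Proj2 t').
Proof. intros Hr. inversion Hr; subst; eauto 6. Qed.

Section Candidate.

Variables (A : ty) (R : tm -> Prop).
Hypothesis HR : RC A R.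

Lemma rc_steps s s' : R s -> steps 0 [] s s' -> R s'.
Proof. intros Hs Hm. induction Hm; auto. exact (rc_CR2 _ _ HR _ _ Hs H). Qed.

Lemma rc_star_of_typed t T : typed t A -> iso_top T -> typed t T -> R (star T).
Proof.
  intros HtA HT HtT. destruct (has_type_unique _ _ _ _ HtA _ HtT).
  exact (rc_CR0_star _ _ HR HT).
Qed.

Lemma rc_var n : twf 0 A -> R (Fvar n A).
Proof.
  intros Hw. apply (rc_CR3 _ _ HR); [constructor; auto | exact I |].
  intros t' Hr. inversion Hr; subst.
  eapply rc_star_of_typed; eauto. constructor; auto.
Qed.

End Candidate.

Lemma RC_SNset psi : twf 0 psi -> RC psi (SNset psi).
Proof.
  intros Hw. constructor.
  - intros t [Ht _]. exact Ht.
  - intros Hiso. split; [apply has_type_star; auto | apply star_SN; auto].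
  - intros t z [Ht Hsn] Hz. split; [apply has_type_replace_star | apply SN_replace_star]; auto.
  - intros t [_ Hsn]. exact Hsn.
  - intros t t' [Ht Hsn] Hr. split; [eapply typed_red | eapply SN_red]; eauto.
  - intros t Ht _ Hred. split; auto. apply SN_of_reducts. intros t' Hr. apply Hred, Hr.
Qed.

Section Products.

Variables (A1 A2 : ty) (R1 R2 : tm -> Prop).
Hypotheses (H1 : RC A1 R1) (H2 : RC A2 R2).

Lemma rc_Proj1 t : typed t (Prod A1 A2) ->
  (forall u v, t = Pair u v -> R1 u) -> (forall t', red t t' -> R1 (Proj1 t')) ->
  R1 (Proj1 t).
Proof.
  intros Ht Hpair Hred. apply (rc_CR3 _ _ H1); [econstructor; eauto | exact I |].
  intros s Hs.
  destruct (red_Proj1_inv t s Hs) as [[u [v [-> ->]]] | [[T [HT [HsT ->]]] | [t' [Ht' ->]]]].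
  - eauto.
  - eapply rc_star_of_typed; eauto. econstructor; eauto.
  - auto.
Qed.

Lemma rc_Proj2 t : typed t (Prod A1 A2) ->
  (forall u v, t = Pair u v -> R2 v) -> (forall t', red t t' -> R2 (Proj2 t')) ->
  R2 (Proj2 t).
Proof.
  intros Ht Hpair Hred. apply (rc_CR3 _ _ H2); [econstructor; eauto | exact I |].
  intros s Hs.
  destruct (red_Proj2_inv t s Hs) as [[u [v [-> ->]]] | [[T [HT [HsT ->]]] | [t' [Ht' ->]]]].
  - eauto.
  - eapply rc_star_of_typed; eauto. econstructor; eauto.
  - auto.
Qed.

Lemma RC_RCprod : twf 0 A1 -> twf 0 A2 -> RC (Prod A1 A2) (RCprod A1 A2 R1 R2).
Proof.
  intros W1 W2. constructor.
  - intros t [Ht _]. exact Ht.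
  - intros Hiso. inversion Hiso as [| | | T1 T2 Hiso1 Hiso2]; subst.
    assert (Ht : typed (star (Prod A1 A2)) (Prod A1 A2)) by (apply has_type_star; simpl; auto).
    split; [exact Ht | split].
    + apply rc_Proj1; auto.
      * intros u v [= <- <-]. exact (rc_CR0_star _ _ H1 Hiso1).
      * intros t' Hr. destruct (star_normal _ Hiso 0 [] t' Hr).
    + apply rc_Proj2; auto.
      * intros u v [= <- <-]. exact (rc_CR0_star _ _ H2 Hiso2).
      * intros t' Hr. destruct (star_normal _ Hiso 0 [] t' Hr).
  - intros t z [Ht [Hu Hv]] Hz. split; [apply has_type_replace_star; auto | split].
    + exact (rc_CR0_variant _ _ H1 (Proj1 t) z Hu Hz).
    + exact (rc_CR0_variant _ _ H2 (Proj2 t) z Hv Hz).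
  - intros t [_ [Hu _]]. apply (SN_preimage Proj1); [intros; constructor; auto|].
    exact (rc_CR1 _ _ H1 _ Hu).
  - intros t t' [Ht [Hu Hv]] Hr. split; [eapply typed_red; eauto | split].
    + apply (rc_CR2 _ _ H1 (Proj1 t)); auto. constructor; auto.
    + apply (rc_CR2 _ _ H2 (Proj2 t)); auto. constructor; auto.
  - intros t Ht Hn Hred. split; [exact Ht | split].
    + apply rc_Proj1; auto; [intros u v ->; contradiction | intros t' Hr; apply Hred, Hr].
    + apply rc_Proj2; auto; [intros u v ->; contradiction | intros t' Hr; apply Hred, Hr].
Qed.

End Products.

Section Arrows.

Variables (A1 A2 : ty) (R1 R2 : tm -> Prop).
Hypotheses (H1 : RC A1 R1) (H2 : RC A2 R2).

Lemma rc_App t : typed t (Arr A1 A2) ->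
  (forall B b u, t = Lam B b -> R1 u -> R2 (subst 0 u b)) ->
  (forall t', red t t' -> RCarr A1 A2 R1 R2 t') ->
  forall u, R1 u -> R2 (App t u).
Proof.
  intros Ht Hbeta Hred u Hu.
  induction (SN_SNacc u (rc_CR1 _ _ H1 u Hu)) as [u _ IH].
  pose proof (rc_typed _ _ H1 u Hu) as Hut.
  apply (rc_CR3 _ _ H2); [econstructor; eauto | exact I |].
  intros s Hs.
  destruct (red_App_inv t u s Hs)
    as [[B [b [-> ->]]] | [[T [HT [HsT ->]]] | [[t' [Ht' ->]] | [u' [Hu' ->]]]]].
  - eauto.
  - eapply rc_star_of_typed; eauto. econstructor; eauto.
  - apply (Hred t' Ht'), Hu.
  - apply IH; auto. exact (rc_CR2 _ _ H1 u u' Hu Hu').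
Qed.

(* For variant closure, [u] is first reduced to its restoration, which avoids [z]:
   then [replace_star z (App t (restore_star z u))] is [App (replace_star z t)
   (replace_star z u)], and [replace_star z u] reduces back to [u]. *)
Lemma RCarr_variant_closed : variant_closed (RCarr A1 A2 R1 R2).
Proof.
  intros t z [Ht Happ] Hz. split; [apply has_type_replace_star; auto|]. intros u Hu.
  assert (Hu' : R1 (restore_star z u)) by (eapply rc_steps; eauto using steps_restore_star).
  assert (Hz' : ~ occurs z Top (App t (restore_star z u))).
  { simpl. pose proof (restore_star_not_occurs z u). tauto. }
  pose proof (rc_CR0_variant _ _ H2 _ z (Happ _ Hu') Hz') as Hrep.
  simpl in Hrep. rewrite replace_restore_star in Hrep.
  eapply rc_steps; eauto. apply (steps_congr 0 [] _ _ (App _)); [intros; constructor; assumption|].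
  apply steps_replace_star.
Qed.

Lemma RC_RCarr : twf 0 A1 -> twf 0 A2 -> RC (Arr A1 A2) (RCarr A1 A2 R1 R2).
Proof.
  intros W1 W2. constructor.
  - intros t [Ht _]. exact Ht.
  - intros Hiso. inversion Hiso as [| B T HT | |]; subst.
    assert (Ht : typed (star (Arr A1 A2)) (Arr A1 A2)) by (apply has_type_star; simpl; auto).
    split; [exact Ht|]. apply rc_App; auto.
    + intros B b u [= -> <-] _. rewrite subst_star. exact (rc_CR0_star _ _ H2 HT).
    + intros t' Hr. destruct (star_normal _ Hiso 0 [] t' Hr).
  - exact RCarr_variant_closed.
  - intros t [_ Happ]. apply (SN_preimage (fun s => App s (Fvar 0 A1))); [intros; constructor; auto|].
    exact (rc_CR1 _ _ H2 _ (Happ _ (rc_var _ _ H1 0 W1))).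
  - intros t t' [Ht Happ] Hr. split; [eapply typed_red; eauto|]. intros u Hu.
    apply (rc_CR2 _ _ H2 (App t u)); auto. constructor; auto.
  - intros t Ht Hn Hred. split; [exact Ht|].
    apply rc_App; auto. intros B b u ->. contradiction.
Qed.

End Arrows.

Theorem mainTheorem14 :
  (forall psi : ty, twf 0 psi -> RC psi (SNset psi)) /\
  (forall (phi1 phi2 : ty) (R1 R2 : tm -> Prop),
      twf 0 phi1 -> twf 0 phi2 -> RC phi1 R1 -> RC phi2 R2 ->
      RC (Prod phi1 phi2) (RCprod phi1 phi2 R1 R2) /\
      RC (Arr phi1 phi2) (RCarr phi1 phi2 R1 R2)).
Proof.
  split; [exact RC_SNset|].
  intros phi1 phi2 R1 R2 W1 W2 H1 H2.
  split; [apply RC_RCprod | apply RC_RCarr]; auto.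
Qed.
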